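(* Let $\{\epsilon_n\}_{n\ge1}$ be a sequence of positive real numbers and $\{a_n\}_{n\ge1}\subset\mathbb C$. For a sequence $\{a'_n\}_{n\ge 1}\subset\mathbb C$ define rational functions $r_n\colon\overline{\mathbb C}\to\overline{\mathbb C}$ recursively by $r_0(z)=z$, $r_1(z)=\frac{\epsilon_1}{z-a'_1}$, and $$r_{n+2}(z)=r_n(z)+\frac{\epsilon_{n+2}}{r_{n+1}(z)-a'_{n+2}},\qquad n\ge0.$$ Then for every sequence $\{\eta_n\}_{n\ge1}$ of positive numbers there is a sequence $\{a'_n\}_{n\ge1}\subset\mathbb C$ with $|a'_n-a_n|<\eta_n$ for all $n$ such that, for the corresponding $r_n$: (i) for every $n\ge0$, $r_n$ and $r_{n+1}$ have no common pole, and $r_n^{-1}(\infty)\subsetneq r_{n+2}^{-1}(\infty)$; in particular $\infty$ is a pole of $r_n$ exactly when $n$ is even; (ii) for every $n\ge 0$, $r_n$ has exactly $k_n$ poles, all simple; consequently the equation $r_n(z)=a'_{n+1}$ has exactly $k_n$ solutions, all distinct.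
   Context: $\{k_n\}_{n\ge0}$ denotes the Fibonacci sequence: $k_0=k_1=1$, $k_{n+2}=k_{n+1}+k_n$. Poles are counted in $\overline{\mathbb C}$ (including possibly $\infty$). *)

From HB Require Import structures.
From mathcomp Require Import all_boot all_order all_algebra.
From mathcomp Require Import fraction.
From mathcomp Require Import reals.
From mathcomp.real_closed Require Import complex.
Set Implicit Arguments. Unset Strict Implicit. Unset Printing Implicit Defensive.
Import Order.TTheory GRing.Theory Num.Theory.
Local Open Scope ring_scope.

Notation "x %:F" := (@FracField.tofrac _ x).
Local Open Scope complex_scope.
Local Open Scope ring_scope.

Fixpoint fib (n : nat) : nat :=
  match n with
  | 0 => 1
  | 1 => 1
  | (m.+1 as n').+1 => (fib n' + fib m)%N
  end.

Definition ratf (R : realType) := {fraction {poly R[i]}}.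

Definition ratC (R : realType) (c : R[i]) : ratf R := (c%:P)%:F.
Definition ratX (R : realType) : ratf R := ('X : {poly R[i]})%:F.

Fixpoint rpair (R : realType) (eps : nat -> R) (a : nat -> R[i]) (n : nat)
  : ratf R * ratf R :=
  match n with
  | 0 => (ratX R, ratC (eps 1%N)%:C / (ratX R - ratC (a 1%N)))
  | m.+1 => let (u, v) := rpair eps a m in
            (v, u + ratC (eps m.+2)%:C / (v - ratC (a m.+2)))
  end.

Definition rfun (R : realType) (eps : nat -> R) (a : nat -> R[i]) (n : nat)
  : ratf R := (rpair eps a n).1.

(* Points of the Riemann sphere: Some c (c in C) or None (= infinity). *)
Definition sphere (R : realType) := option R[i].

Definition is_rep (R : realType) (f : ratf R) (p q : {poly R[i]}) : Prop :=
  coprimep p q /\ q != 0 /\ f = p%:F / q%:F.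

Definition is_pole (R : realType) (f : ratf R) (z : sphere R) : Prop :=
  exists p q, is_rep f p q /\
    match z with
    | Some c => root q c
    | None => (size q < size p)%N
    end.

Definition is_simple_pole (R : realType) (f : ratf R) (z : sphere R) : Prop :=
  exists p q, is_rep f p q /\
    match z with
    | Some c => mup c q = 1%N
    | None => size p = (size q).+1
    end.

Definition is_zero (R : realType) (f : ratf R) (z : sphere R) : Prop :=
  exists p q, is_rep f p q /\
    match z with
    | Some c => root p c
    | None => (size p < size q)%N
    end.

Definition is_simple_zero (R : realType) (f : ratf R) (z : sphere R) : Prop :=
  exists p q, is_rep f p q /\
    match z with
    | Some c => mup c p = 1%N
    | None => size q = (size p).+1
    end.

Definition has_exactly (R : realType) (P : sphere R -> Prop) (k : nat) : Prop :=
  exists s : seq (sphere R), uniq s /\ size s = k /\ forall z, P z <-> z \in s.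

(* Write r_n = P_n / Q_n in lowest terms and D_n = P_n - a'_(n+1) Q_n. The
   recursion gives r_(n+1) = (P_(n-1) D_n + eps_(n+1) Q_n Q_(n-1)) / (Q_(n-1) D_n),
   which is again in lowest terms as soon as D_n is prime to Q_(n-1). The finite
   poles of r_(n+1) are then those of r_(n-1) together with the roots of D_n, i.e.
   the solutions of r_n(z) = a'_(n+1). To make all of them simple and new, D_n must
   be squarefree and prime to Q_(n-1); each condition only excludes the finitely
   many values that P_n / Q_n takes at the roots of the Wronskian P_n' Q_n - P_n Q_n'
   and at the roots of Q_(n-1), so a'_(n+1) can be chosen arbitrarily close to
   a_(n+1). Degree bookkeeping then shows that infinity is a (simple) pole of r_n
   exactly for even n and that r_n has deg Q_n + [n even] = k_n poles. *)

From HB Require Import structures.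
From mathcomp Require Import all_boot all_order all_algebra.
From mathcomp Require Import fraction.
From mathcomp Require Import reals.
From mathcomp.real_closed Require Import complex.
From mathcomp Require Import separable ring zify.
Set Implicit Arguments. Unset Strict Implicit. Unset Printing Implicit Defensive.
Import Order.TTheory GRing.Theory Num.Theory.
Local Open Scope complex_scope.
Local Open Scope ring_scope.

Section ClosedFieldRoots.
Variable F : closedFieldType.
Implicit Types p q : {poly F}.

Definition closed_roots p : seq F := sval (closed_field_poly_normal p).

Lemma closed_rootsE p : p = lead_coef p *: \prod_(x <- closed_roots p) ('X - x%:P).
Proof. exact: svalP (closed_field_poly_normal p). Qed.

Lemma mem_closed_roots p x : p != 0 -> (x \in closed_roots p) = root p x.
Proof.
move=> p0; rewrite [in RHS](closed_rootsE p) rootZ ?lead_coef_eq0 //.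
by rewrite root_prod_XsubC.
Qed.

Lemma size_closed_roots p : p != 0 -> size (closed_roots p) = (size p).-1.
Proof.
move=> p0; rewrite [in RHS](closed_rootsE p) size_scale ?lead_coef_eq0 //.
by rewrite size_prod_XsubC.
Qed.

Lemma uniq_closed_roots p : separable_poly p -> uniq (closed_roots p).
Proof.
move=> sep_p; have p0 := separable_poly_neq0 sep_p.
rewrite -separable_prod_XsubC -(@eqp_separable _ p) //.
by rewrite [p in p %= _]closed_rootsE eqp_scale ?lead_coef_eq0.
Qed.

Lemma mup_separable p x : separable_poly p -> root p x -> mup x p = 1%N.
Proof.
move=> sep_p px; have p0 := separable_poly_neq0 sep_p.
rewrite (closed_rootsE p) -mul_polyC mupMr ?rootC ?lead_coef_eq0 //.
by rewrite mu_prod_XsubC count_uniq_mem ?uniq_closed_roots ?mem_closed_roots ?px.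
Qed.

Lemma coprimep_noroot p q : (forall x, root p x -> ~~ root q x) -> coprimep p q.
Proof.
move=> pq; apply: contraT => /closed_rootP[x].
by rewrite root_gcd => /andP[/pq/negPf->].
Qed.

End ClosedFieldRoots.

Lemma size_dvdp_deriv (F : numDomainType) (p : {poly F}) :
  p %| p^`() -> (size p <= 1)%N.
Proof.
move=> dvd_p; have [->|p0] := eqVneq p 0; first by rewrite size_poly0.
have p'0 : p^`() = 0.
  apply: contraTeq dvd_p => p'0.
  by apply: contraTN (lt_size_deriv p0) => /dvdp_leq; rewrite -leqNgt; apply.
rewrite leqNgt; apply: contraNN p0 => lt1p; rewrite -lead_coef_eq0.
have := coef_deriv p (size p).-2; rewrite p'0 coef0 prednK -?subn1 ?subn_gt0 //.
rewrite subn1 -lead_coefE => /esym/eqP; rewrite mulrn_eq0.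
by case/orP => //; rewrite -subn1 subn_eq0 leqNgt lt1p.
Qed.

Section Wronskian.
Variable F : numClosedFieldType.
Implicit Types P Q S : {poly F}.

Definition wronskian P Q := P^`() * Q - P * Q^`().

Lemma wronskian_eq0 P Q : coprimep P Q -> wronskian P Q = 0 ->
  (size P <= 1)%N && (size Q <= 1)%N.
Proof.
move=> coPQ /eqP; rewrite subr_eq0 => /eqP eW.
have coQP : coprimep Q P by rewrite coprimep_sym.
rewrite !size_dvdp_deriv //.
  by rewrite -(Gauss_dvdpr _ coQP) -eW dvdp_mull.
by rewrite -(Gauss_dvdpl _ coPQ) eW dvdp_mulr.
Qed.

Lemma root_sub_scale P Q c x : coprimep P Q -> root (P - c *: Q) x ->
  Q.[x] != 0 /\ c = P.[x] / Q.[x].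
Proof.
move=> coPQ; rewrite rootE !hornerE subr_eq0 => /eqP ePQ.
have Qx0 : Q.[x] != 0.
  apply/eqP => Qx0; have Px : root P x by rewrite rootE ePQ Qx0 mulr0.
  by have := coprimep_root coPQ Px; rewrite Qx0 eqxx.
by rewrite ePQ mulfK.
Qed.

Lemma coprimep_sub_scale P Q c : coprimep P Q -> coprimep Q (P - c *: Q).
Proof.
by move=> coPQ; rewrite -scaleNr -mul_polyC addrC coprimep_addl_mul coprimep_sym.
Qed.

Lemma coprimep_sub_scale_roots S P Q c : coprimep P Q -> S != 0 ->
  c \notin [seq P.[x] / Q.[x] | x <- closed_roots S] -> coprimep S (P - c *: Q).
Proof.
move=> coPQ S0 cS; apply: coprimep_noroot => x Sx; apply: contra cS => Dx.
have [_ ->] := root_sub_scale coPQ Dx.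
by apply: map_f; rewrite mem_closed_roots.
Qed.

Lemma separable_sub_scale P Q c : coprimep P Q -> (1 < size P)%N || (1 < size Q)%N ->
  c \notin [seq P.[x] / Q.[x] | x <- closed_roots (wronskian P Q)] ->
  separable_poly (P - c *: Q).
Proof.
move=> coPQ nconst cW; have W0 : wronskian P Q != 0.
  by apply: contraTneq nconst => /(wronskian_eq0 coPQ); rewrite negb_or -!leqNgt.
rewrite unlock; apply: coprimep_noroot => x Dx; apply: contra cW => D'x.
have [_ ecx] := root_sub_scale coPQ Dx; rewrite ecx; apply: map_f.
move: Dx D'x; rewrite mem_closed_roots // /wronskian derivB derivZ.
by rewrite !rootE !hornerE !subr_eq0 => /eqP-> /eqP->; rewrite mulrAC.
Qed.

End Wronskian.

Section AvoidNear.
Variable F : numFieldType.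
Implicit Types (t e : F) (L : seq F).

Definition avoid_near t e L : F :=
  let s := mkseq (fun k => t + e / k.+2%:R) (size L).+1 in
  nth t s (find [predC L] s).

Lemma avoid_nearP t e L : 0 < e -> avoid_near t e L \notin L /\ `|avoid_near t e L - t| < e.
Proof.
move=> e0; rewrite /avoid_near; set s := mkseq _ _.
have uniq_s : uniq s.
  apply: mkseq_uniq => i j /addrI /(mulfI (lt0r_neq0 e0)) /invr_inj /eqP.
  by rewrite eqr_nat => /eqP[].
have has_s : has [predC L] s.
  apply/hasPn => /= sL; have /uniq_leq_size : {subset s <= L}.
    by move=> x /sL; rewrite negbK.
  by rewrite size_mkseq ltnn => /(_ uniq_s).
split; first exact: (nth_find t has_s).
have /mapP[k _ ->] : nth t s (find [predC L] s) \in s by rewrite mem_nth -?has_find.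
rewrite addrC addKr ger0_norm ?divr_ge0 ?ltW // ltr_pdivrMr ?ltr0n //.
by rewrite ltr_pMr // ltr1n.
Qed.

End AvoidNear.

Section SimpleFraction.
Variable F : idomainType.
Implicit Types P Q D : {poly F}.

(* [P / Q] is reduced with simple finite poles; [b] tells whether it has a
   pole at infinity, which is then simple as well. *)
Record simple_frac (b : bool) P Q : Prop := SimpleFrac {
  simple_frac_coprime : coprimep P Q;
  simple_frac_separable : separable_poly Q;
  simple_frac_size : if b then size P = (size Q).+1 else (size P < size Q)%N }.

Lemma size_sub_scale b P Q c : simple_frac b P Q -> (~~ b -> c != 0) ->
  size (P - c *: Q) = (size Q + b)%N.
Proof.
case: b => -[_ _ szP] c0; rewrite -scaleNr.
  rewrite size_polyDl ?szP; first lia.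
  by rewrite (leq_ltn_trans (size_scale_leq _ _)) ?szP.
have c0' : - c != 0 by rewrite oppr_eq0 c0.
by rewrite addrC size_polyDl size_scale //; lia.
Qed.

Lemma simple_frac_step b e Pm Qm P Q D :
  simple_frac (~~ b) Pm Qm -> simple_frac b P Q -> e != 0 ->
  coprimep Qm D -> coprimep Q D -> separable_poly D -> size D = (size Q + b)%N ->
  simple_frac (~~ b) (Pm * D + e *: (Q * Qm)) (Qm * D).
Proof.
move=> [coPQm sepQm szPm] [_ sepQ _] e0 coQmD coQD sepD szD.
have Qm0 := separable_poly_neq0 sepQm; have Q0 := separable_poly_neq0 sepQ.
have D0 := separable_poly_neq0 sepD.
split.
- rewrite coprimepMr; apply/andP; split.
    rewrite coprimep_sym scalerAl addrC coprimep_addl_mul coprimepMr.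
    by rewrite coprimep_sym coPQm.
  rewrite coprimep_sym coprimep_addl_mul coprimepZr // coprimepMr.
  by rewrite !(coprimep_sym D) coQD.
- by rewrite separable_mul sepQm sepD.
have szQQm : size (e *: (Q * Qm)) = (size Q + size Qm).-1 by rewrite size_scale ?size_mul.
have [q_gt0 qm_gt0] : (0 < size Q)%N /\ (0 < size Qm)%N by rewrite !size_poly_gt0.
rewrite size_mul //; case: b szPm szD => /= szPm szD.
  apply: leq_ltn_trans (size_polyD _ _) _; rewrite gtn_max szQQm szD.
  (* [/=] identifies the [size] terms that differ only by their coercion path;
     [lia] would treat them as distinct atoms. *)
  apply/andP; split; last by rewrite /=; lia.
  by apply: leq_ltn_trans (size_polyMleq _ _) _; rewrite szD /=; lia.
have Pm0 : Pm != 0 by rewrite -size_poly_gt0 szPm.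
rewrite size_polyDl size_mul // szPm szD; first by move: q_gt0 qm_gt0; rewrite /=; lia.
by rewrite size_scale // !size_mul //; move: q_gt0 qm_gt0; rewrite /=; lia.
Qed.

End SimpleFraction.

Lemma div_subr (K : fieldType) (p q c : K) : q != 0 -> p / q - c = (p - c * q) / q.
Proof. by move=> q0; field. Qed.

Lemma add_div_sub_div (K : fieldType) (pm qm p q c e : K) :
  qm != 0 -> q != 0 -> p - c * q != 0 ->
  pm / qm + e / (p / q - c) = (pm * (p - c * q) + e * (q * qm)) / (qm * (p - c * q)).
Proof. by move=> qm0 q0 d0; rewrite div_subr //; field; rewrite qm0 q0 d0. Qed.

Lemma tofrac_sub_scale (F : idomainType) (P Q : {poly F}) c :
  (P - c *: Q)%:F = P%:F - (c%:P)%:F * Q%:F.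
Proof. by rewrite -mul_polyC tofracB tofracM. Qed.

(* With [r_(-1) = 0], the recursion defining [r_(n+2)] also yields [r_1]. *)
Lemma rfun_rec (R : realType) (eps : nat -> R) (b : nat -> R[i]) n :
  rfun eps b n.+1 = (if n is m.+1 then rfun eps b m else 0)
                    + ratC (eps n.+1)%:C / (rfun eps b n - ratC (b n.+1)).
Proof. by case: n => [|n]; rewrite /rfun /= ?add0r //; case: (rpair eps b n). Qed.

Section PolesAndZeros.
Variable R : realType.
Implicit Types (f : ratf R) (P Q : {poly R[i]}).

Lemma is_rep_eqp f P Q P' Q' : is_rep f P Q -> is_rep f P' Q' -> P %= P' /\ Q %= Q'.
Proof.
move=> [coPQ [Q0 ->]] [coPQ' [Q0' ePQ]].
have ePQ' : P * Q' = P' * Q.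
  by apply/eqP; rewrite -tofrac_eq !tofracM -eqr_div ?tofrac_eq0 // ePQ.
have coQP : coprimep Q P by rewrite coprimep_sym.
have coQP' : coprimep Q' P' by rewrite coprimep_sym.
split; apply/andP; split.
- by rewrite -(Gauss_dvdpl _ coPQ) -ePQ' dvdp_mulr.
- by rewrite -(Gauss_dvdpl _ coPQ') ePQ' dvdp_mulr.
- by rewrite -(Gauss_dvdpr _ coQP) ePQ' dvdp_mull.
- by rewrite -(Gauss_dvdpr _ coQP') -ePQ' dvdp_mull.
Qed.

Lemma is_pole_finite f P Q c : is_rep f P Q -> is_pole f (Some c) <-> root Q c.
Proof.
move=> rPQ; split=> [[P' [Q' [rPQ' Q'c]]]|Qc]; last by exists P, Q.
by have [_ /eqp_root ->] := is_rep_eqp rPQ rPQ'.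
Qed.

Lemma is_pole_infty f P Q : is_rep f P Q -> is_pole f None <-> (size Q < size P)%N.
Proof.
move=> rPQ; split=> [[P' [Q' [rPQ' szPQ']]]|szPQ]; last by exists P, Q.
by have [/eqp_size -> /eqp_size ->] := is_rep_eqp rPQ rPQ'.
Qed.

Lemma is_zero_finite f P Q c : is_rep f P Q -> is_zero f (Some c) <-> root P c.
Proof.
move=> rPQ; split=> [[P' [Q' [rPQ' P'c]]]|Pc]; last by exists P, Q.
by have [/eqp_root -> _] := is_rep_eqp rPQ rPQ'.
Qed.

Lemma is_zero_infty f P Q : is_rep f P Q -> is_zero f None <-> (size P < size Q)%N.
Proof.
move=> rPQ; split=> [[P' [Q' [rPQ' szPQ']]]|szPQ]; last by exists P, Q.
by have [/eqp_size -> /eqp_size ->] := is_rep_eqp rPQ rPQ'.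
Qed.

Lemma has_exactly_roots_infty (A : sphere R -> Prop) Q (b : bool) :
  separable_poly Q -> (forall c, A (Some c) <-> root Q c) -> (A None <-> b) ->
  has_exactly A ((size Q).-1 + b).
Proof.
move=> sepQ AQ Ab; have Q0 := separable_poly_neq0 sepQ.
exists ([seq Some x | x <- closed_roots Q] ++ nseq b None); split; [|split].
- rewrite cat_uniq map_inj_uniq ?uniq_closed_roots //; last by move=> x y [].
  by case: b {Ab} => //=; rewrite orbF andbT; apply/mapP => -[].
- by rewrite size_cat size_map size_nseq size_closed_roots.
case=> [c|]; rewrite mem_cat mem_nseq.
  by rewrite AQ mem_map ?mem_closed_roots ?andbF ?orbF //; move=> x y [].
rewrite Ab eqxx andbT; case: b {Ab} => /=; rewrite ?orbT ?orbF //.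
by split=> // /mapP[].
Qed.

Lemma simple_frac_pole_infty f b P Q :
  is_rep f P Q -> simple_frac b P Q -> is_pole f None <-> b.
Proof.
move=> rPQ [_ _ szPQ]; rewrite (is_pole_infty rPQ).
by case: b szPQ => [->|/ltnW]; rewrite ?ltnSn // ltnNge => ->.
Qed.

Lemma simple_frac_poles f b P Q : is_rep f P Q -> simple_frac b P Q ->
  has_exactly (is_pole f) ((size Q).-1 + b).
Proof.
move=> rPQ sPQ; apply: has_exactly_roots_infty (simple_frac_separable sPQ) _ _.
  by move=> c; exact: is_pole_finite rPQ.
exact: simple_frac_pole_infty rPQ sPQ.
Qed.

Lemma simple_frac_simple_poles f b P Q z : is_rep f P Q -> simple_frac b P Q ->
  is_pole f z -> is_simple_pole f z.
Proof.
move=> rPQ sPQ fz; exists P, Q; split=> //; case: z fz => [c|].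
  by rewrite (is_pole_finite _ rPQ); apply: mup_separable (simple_frac_separable sPQ).
rewrite (simple_frac_pole_infty rPQ sPQ); case: sPQ => _ _.
by case: b.
Qed.

Lemma separable_num_zeros f P Q : is_rep f P Q -> separable_poly P ->
  (size Q <= size P)%N -> has_exactly (is_zero f) (size P).-1.
Proof.
move=> rPQ sepP szQP; have := @has_exactly_roots_infty (is_zero f) P false sepP.
rewrite addn0; apply; first by move=> c; exact: is_zero_finite rPQ.
by rewrite (is_zero_infty rPQ) ltnNge szQP.
Qed.

Lemma separable_num_simple_zeros f P Q z : is_rep f P Q -> separable_poly P ->
  (size Q <= size P)%N -> is_zero f z -> is_simple_zero f z.
Proof.
move=> rPQ sepP szQP; case: z => [c|]; last by rewrite (is_zero_infty rPQ) ltnNge szQP.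
by rewrite (is_zero_finite _ rPQ) => Pc; exists P, Q; rewrite mup_separable.
Qed.

End PolesAndZeros.

Lemma fibSS n : fib n.+2 = (fib n.+1 + fib n)%N.
Proof. by []. Qed.

Lemma fib_gt0 n : (0 < fib n)%N.
Proof. by elim: n => [|[|n] IH] //; rewrite addn_gt0 IH. Qed.

Section Construction.
Variables (R : realType) (eps : nat -> R) (a : nat -> R[i]) (eta : nat -> R).

(* [state n] holds reduced representations of r_(n-1) and r_n, where r_(-1) = 0. *)
Record frac_state := FracState {
  prev_num : {poly R[i]}; prev_den : {poly R[i]}; num : {poly R[i]}; den : {poly R[i]} }.

(* Avoiding 0 keeps deg D_n = deg Q_n for odd n, avoiding the critical values of
   P_n / Q_n keeps D_n squarefree, and avoiding the values of P_n / Q_n at the poles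
   of r_(n-1) keeps D_n prime to Q_(n-1). *)
Definition forbidden (s : frac_state) : seq R[i] :=
  0 :: [seq (num s).[x] / (den s).[x]
         | x <- closed_roots (wronskian (num s) (den s)) ++ closed_roots (prev_den s)].

Definition next_param n s := avoid_near (a n.+1) (eta n.+1)%:C (forbidden s).

Fixpoint state n : frac_state :=
  if n is m.+1 then
    let s := state m in
    let D := num s - next_param m s *: den s in
    FracState (num s) (den s)
      (prev_num s * D + (eps m.+1)%:C *: (den s * prev_den s)) (prev_den s * D)
  else FracState 0 1 'X 1.

Definition a' n := if n is m.+1 then next_param m (state m) else 0.

Local Notation Pp n := (prev_num (state n)).
Local Notation Qp n := (prev_den (state n)).
Local Notation P n := (num (state n)).
Local Notation Q n := (den (state n)).
Local Notation r n := (rfun eps a' n).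

Definition dif n := P n - a' n.+1 *: Q n.

Definition rprev n := if n is m.+1 then r m else 0.

Hypothesis eps_gt0 : forall n, (0 < n)%N -> 0 < eps n.
Hypothesis eta_gt0 : forall n, (0 < n)%N -> 0 < eta n.

Lemma a'_near n : (0 < n)%N -> `|a' n - a n| < (eta n)%:C.
Proof. by case: n => // n _; apply: (avoid_nearP _ _ _).2; rewrite ltcR eta_gt0. Qed.

Record state_inv n : Prop := StateInv {
  inv_prev : simple_frac (odd n) (Pp n) (Qp n);
  inv_cur : simple_frac (~~ odd n) (P n) (Q n);
  inv_coprime : coprimep (Qp n) (Q n);
  inv_size : (size (Q n) + ~~ odd n)%N = (fib n).+1;
  inv_size_prev : (size (Qp n) + size (Q n))%N = (fib n.+1).+1;
  inv_rprev : rprev n = (Pp n)%:F / (Qp n)%:F;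
  inv_rfun : r n = (P n)%:F / (Q n)%:F }.

Lemma state_inv0 : state_inv 0.
Proof.
split=> //=; rewrite ?size_poly1 ?size_polyX ?tofrac0 ?tofrac1 ?mul0r ?divr1 //.
- by split; rewrite ?coprimep1 ?size_poly0 ?size_poly1 // unlock coprime1p.
- by split; rewrite ?coprimep1 ?size_polyX ?size_poly1 // unlock coprime1p.
- exact: coprimep1.
Qed.

Lemma dif_props n : state_inv n ->
  [/\ coprimep (Qp n) (dif n), coprimep (Q n) (dif n), separable_poly (dif n)
    & size (dif n) = (size (Q n) + ~~ odd n)%N].
Proof.
case=> [[_ sepQp _] sPQ _ szQ _ _ _]; have coPQ := simple_frac_coprime sPQ.
have [] := avoid_nearP (a n.+1) (forbidden (state n)) (_ : 0 < (eta n.+1)%:C).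
  by rewrite ltcR eta_gt0.
rewrite -/(a' n.+1) in_cons map_cat mem_cat !negb_or => /and3P[c0 cW cQp] _.
split.
- exact: coprimep_sub_scale_roots coPQ (separable_poly_neq0 sepQp) cQp.
- exact: coprimep_sub_scale coPQ.
- apply: separable_sub_scale coPQ _ cW; have := fib_gt0 n.
  case: (odd n) sPQ szQ => -[_ _ szP] /= szQ fib_n_gt0; apply/orP.
    by right; rewrite addn0 in szQ; rewrite szQ ltnS.
  by left; move: szQ; rewrite szP addn1 => -[->].
- exact: size_sub_scale sPQ (fun _ => c0).
Qed.

Lemma stateS n : state n.+1 =
  FracState (P n) (Q n) (Pp n * dif n + (eps n.+1)%:C *: (Q n * Qp n)) (Qp n * dif n).
Proof. by []. Qed.

Lemma state_invS n : state_inv n -> state_inv n.+1.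
Proof.
move=> I; have [coQpD coQD sepD szD] := dif_props I.
case: I => sPQp sPQ coQpQ szQ szQpQ rp rc.
have e0 : (eps n.+1)%:C != 0 by rewrite eq_complex /= eqxx andbT lt0r_neq0 ?eps_gt0.
have [Qp0 Q0] := (separable_poly_neq0 (simple_frac_separable sPQp),
                  separable_poly_neq0 (simple_frac_separable sPQ)).
have D0 := separable_poly_neq0 sepD.
split; rewrite ?oddS ?negbK stateS; cbn [prev_num prev_den num den].
- exact: sPQ.
- rewrite -(negbK (odd n)) in sPQp *.
  exact: simple_frac_step sPQp sPQ e0 coQpD coQD sepD szD.
- by rewrite coprimepMr coprimep_sym coQpQ.
- rewrite size_mul // szD -szQpQ addnA.
  have : (0 < size (Qp n) + size (Q n))%N by rewrite addn_gt0 size_poly_gt0 Qp0.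
  by case: (odd n) => /= pos; rewrite ?addn0 ?addn1 ?prednK.
- by rewrite size_mul // szD fibSS addnA -addnS -szQ szQpQ addSn succnK addnCA.
- exact: rc.
rewrite rfun_rec -/(rprev n) rp rc /ratC -mul_polyC tofracD !tofracM.
rewrite tofrac_sub_scale add_div_sub_div ?tofrac_eq0 //.
by rewrite -tofrac_sub_scale tofrac_eq0.
Qed.

Lemma state_invP n : state_inv n.
Proof. by elim: n => [|n /state_invS]; [exact: state_inv0|]. Qed.

Lemma den_stateSS n : Q n.+2 = Q n * dif n.+1.
Proof. by []. Qed.

Lemma size_dif n : size (dif n) = (fib n).+1.
Proof. have [_ _ _ ->] := dif_props (state_invP n); exact: inv_size (state_invP n). Qed.

Lemma is_rep_rfun n : is_rep (r n) (P n) (Q n).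
Proof.
case: (state_invP n) => _ [coPQ sepQ _] _ _ _ _ ->.
by split; rewrite ?separable_poly_neq0.
Qed.

Lemma is_rep_rfun_sub n : is_rep (r n - ratC (a' n.+1)) (dif n) (Q n).
Proof.
have [_ coQD _ _] := dif_props (state_invP n); have [_ [Q0 ->]] := is_rep_rfun n.
split; first by rewrite coprimep_sym.
by split; rewrite // tofrac_sub_scale div_subr ?tofrac_eq0.
Qed.

Lemma pole_infty n : is_pole (r n) None <-> ~~ odd n.
Proof. exact: simple_frac_pole_infty (is_rep_rfun n) (inv_cur (state_invP n)). Qed.

Lemma no_common_pole n z : ~ (is_pole (r n) z /\ is_pole (r n.+1) z).
Proof.
case: z => [c|] [].
  rewrite !(is_pole_finite c (is_rep_rfun _)) => Qc.
  by apply/negP; apply: coprimep_root (inv_coprime (state_invP n.+1)) Qc.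
by rewrite !pole_infty oddS negbK => /negP.
Qed.

Lemma poles_subset n z : is_pole (r n) z -> is_pole (r n.+2) z.
Proof.
case: z => [c|]; last by rewrite !pole_infty !oddS negbK.
by rewrite !(is_pole_finite c (is_rep_rfun _)) den_stateSS rootM => ->.
Qed.

Lemma new_pole n : exists z, is_pole (r n.+2) z /\ ~ is_pole (r n) z.
Proof.
have [coQD _ _ _] := dif_props (state_invP n.+1).
have /closed_rootP[x Dx] : size (dif n.+1) != 1%N by rewrite size_dif eqSS -lt0n fib_gt0.
exists (Some x); rewrite !(is_pole_finite x (is_rep_rfun _)) den_stateSS rootM Dx orbT.
by split=> // /(coprimep_root coQD)/negP.
Qed.

Lemma poles_rfun n : has_exactly (is_pole (r n)) (fib n).
Proof.
have [_ sPQ _ szQ _ _ _] := state_invP n.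
have Q0 := separable_poly_neq0 (simple_frac_separable sPQ).
have := simple_frac_poles (is_rep_rfun n) sPQ.
by rewrite -subn1 addnBAC ?size_poly_gt0 // szQ subn1.
Qed.

Lemma simple_poles_rfun n z : is_pole (r n) z -> is_simple_pole (r n) z.
Proof. exact: simple_frac_simple_poles (is_rep_rfun n) (inv_cur (state_invP n)). Qed.

Lemma size_den_le_dif n : (size (Q n) <= size (dif n))%N.
Proof. by have [_ _ _ ->] := dif_props (state_invP n); rewrite leq_addr. Qed.

Lemma zeros_rfun_sub n : has_exactly (is_zero (r n - ratC (a' n.+1))) (fib n).
Proof.
have [_ _ sepD _] := dif_props (state_invP n).
by have := separable_num_zeros (is_rep_rfun_sub n) sepD (size_den_le_dif n); rewrite size_dif.
Qed.

Lemma simple_zeros_rfun_sub n z : is_zero (r n - ratC (a' n.+1)) z ->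
  is_simple_zero (r n - ratC (a' n.+1)) z.
Proof.
have [_ _ sepD _] := dif_props (state_invP n).
exact: separable_num_simple_zeros (is_rep_rfun_sub n) sepD (size_den_le_dif n).
Qed.

End Construction.

Theorem lemma2p2 (R : realType) (eps : nat -> R) (a : nat -> R[i]) :
  (forall n, (0 < n)%N -> 0 < eps n) ->
  forall eta : nat -> R, (forall n, (0 < n)%N -> 0 < eta n) ->
  exists a' : nat -> R[i],
    (forall n, (0 < n)%N -> `|a' n - a n| < (eta n)%:C) /\
    (forall n : nat,
      (forall z, ~ (is_pole (rfun eps a' n) z /\ is_pole (rfun eps a' n.+1) z)) /\
      (forall z, is_pole (rfun eps a' n) z -> is_pole (rfun eps a' n.+2) z) /\
      (exists z, is_pole (rfun eps a' n.+2) z /\ ~ is_pole (rfun eps a' n) z) /\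
      (is_pole (rfun eps a' n) None <-> ~~ odd n)) /\
    (forall n : nat,
      has_exactly (is_pole (rfun eps a' n)) (fib n) /\
      (forall z, is_pole (rfun eps a' n) z -> is_simple_pole (rfun eps a' n) z) /\
      has_exactly (is_zero (rfun eps a' n - ratC (a' n.+1))) (fib n) /\
      (forall z, is_zero (rfun eps a' n - ratC (a' n.+1)) z ->
                 is_simple_zero (rfun eps a' n - ratC (a' n.+1)) z)).
Proof.
move=> eps_gt0 eta eta_gt0; exists (a' eps a eta).
split; first exact: a'_near.
split=> n.
  split; first exact: no_common_pole.
  split; first exact: poles_subset.
  split; first exact: new_pole.
  exact: pole_infty.
split; first exact: poles_rfun.
split; first exact: simple_poles_rfun.
split; first exact: zeros_rfun_sub.
exact: simple_zeros_rfun_sub.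
Qed.
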